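(* Let $a,b,n$ be positive integers, $h(j)=aj^n+b$ for $j\ge0$, $h(j)=0$ for $j<0$, $\alpha=a/b$ and $c(h)=\lfloor\alpha\rfloor+1$. Let $$\alpha_1=2^n+\sqrt{2^{2n}-2^n+2}-\tfrac12,\qquad g(x)=x+\tfrac32-\sqrt{x^2-(2^{n+1}-1)x-\tfrac74}\ \ (x>\alpha_1).$$ Let $d$ be an integer with $2\le d\le c(h)$. Then: (1) if $\alpha\le\alpha_1$, then $\beta_2^d(h)\ge0$; (2) if $\alpha>\alpha_1$ and $d\le g(\alpha)$, then $\beta_2^d(h)\ge0$; (3) if $\alpha>\alpha_1$ and $d>g(\alpha)$, then $\operatorname{hdepth}(h)<d$.
   Context: For a nonzero function $h:\mathbb Z\to\mathbb Z_{\ge 0}$ with $h(j)=0$ for all sufficiently negative $j$, and integers $k\le d$, set $\beta_k^d(h)=\sum_{j\le k}(-1)^{k-j}\binom{d-j}{k-j}h(j)$, and $\operatorname{hdepth}(h)=\max\{d\in\mathbb Z:\ \beta_k^d(h)\ge 0\text{ for all integers }k\le d\}$. *)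

From HB Require Import structures.
From mathcomp Require Import all_boot all_order all_algebra.
Set Implicit Arguments. Unset Strict Implicit. Unset Printing Implicit Defensive.
Import Order.TTheory GRing.Theory Num.Theory.
Local Open Scope ring_scope.

Definition vanishes_below (h : int -> nat) (L : int) : Prop :=
  forall j : int, j < L -> h j = 0%N.

(* beta_k^d(h) = sum_{j <= k} (-1)^(k-j) C(d-j, k-j) h(j), computed over the
   finite range L <= j <= k, where h vanishes below L (terms with j < L are 0).
   Only used for k <= d, so d - j >= k - j >= 0 for j <= k. *)
Definition betaL (h : int -> nat) (L k d : int) : int :=
  \sum_(i < `|(k - L + 1)%R|%N | L + i%:Z <= k)
     (-1) ^+ `|(k - (L + i%:Z))%R|%N * ('C(`|(d - (L + i%:Z))%R|%N, `|(k - (L + i%:Z))%R|%N))%:Z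
       * (h (L + i%:Z))%:Z.

Definition hdepth_ok (h : int -> nat) (L d : int) : Prop :=
  forall k : int, k <= d -> 0 <= betaL h L k d.

Definition is_hdepth (h : int -> nat) (L m : int) : Prop :=
  hdepth_ok h L m /\ (forall d : int, hdepth_ok h L d -> d <= m).

Definition hpoly (a b n : nat) (j : int) : nat :=
  if 0 <= j then (a * `|j|%N ^ n + b)%N else 0%N.

From HB Require Import structures.
From mathcomp Require Import all_boot all_order all_algebra.
Import Order.TTheory GRing.Theory Num.Theory.
Local Open Scope ring_scope.
From mathcomp Require Import ring lra zify.
From Stdlib Require Import Classical.

(** For [d >= 2] one computes
    [beta_2^d(h) = b/2 * ((d - alpha - 3/2)^2 - D(alpha))] with
    [D(x) = x^2 - (2^(n+1) - 1) x - 7/4], whose positive root is [alpha_1].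
    Hence [beta_2^d(h) >= 0] whenever [D(alpha) <= 0], i.e. [alpha <= alpha_1],
    or [d <= g(alpha)].  Conversely [beta_1^d(h) >= 0] forces [d <= alpha + 1],
    so [d - alpha - 3/2 < 0] and [beta_2^d(h) >= 0] then means [d <= g(alpha)]:
    every [d'] admissible for [hdepth] with [d' >= 2] lies below [g(alpha)]. *)

Lemma betaL_k2 (h : int -> nat) (F : nat) :
  betaL h 0 2 F.+2 = ('C(F.+2, 2) * h 0)%:Z - (F.+1 * h 1)%:Z + (h 2)%:Z.
Proof.
rewrite /betaL big_mkcond !big_ord_recr big_ord0 /=.
rewrite !addn0 !add0r subn1 subn2 /= subn1 subn2 /= bin1 bin0 sqrrN expr1n expr1 expr0.
by rewrite !mul1r mulN1r !PoszM mulNr.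
Qed.

Lemma betaL_k1 (h : int -> nat) (F : nat) :
  betaL h 0 1 F.+2 = - (F.+2 * h 0)%:Z + (h 1)%:Z.
Proof.
rewrite /betaL big_mkcond !big_ord_recr big_ord0 /=.
rewrite !addn0 !add0r subn1 /= bin1 bin0 expr1 expr0.
by rewrite !mul1r mulN1r !PoszM mulNr.
Qed.

Lemma hdepth_ok_lt0 (h : int -> nat) (d : int) : d < 0 -> hdepth_ok h 0 d.
Proof. by move=> d_lt0 k k_le_d; rewrite /betaL big1 // => i; lia. Qed.

Lemma int_has_max (P : int -> Prop) (lo hi : int) :
  P lo -> (forall x, P x -> x <= hi) -> exists m, P m /\ forall x, P x -> x <= m.
Proof.
move=> Plo P_le_hi; have [N hiE] : exists N : nat, hi = lo + N%:Z.
  by exists `|hi - lo|%N; have := P_le_hi _ Plo; lia.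
move: P_le_hi; rewrite {}hiE.
elim: N => [|N IHN] P_le; first by exists lo; split=> // x /P_le; rewrite addr0.
have [PN | nPN] := classic (P (lo + N.+1%:Z)); first by exists (lo + N.+1%:Z).
apply: IHN => x Px; have := P_le _ Px.
have : x <> lo + N.+1%:Z by move=> xE; apply: nPN; rewrite -xE.
lia.
Qed.

Section Discriminant.
Context {R : rcfType}.
Implicit Types t x u D : R.

Lemma ler_sqr_sqrt_npos D u :
  u <= 0 -> (D <= u ^+ 2) = (u <= - Num.sqrt D).
Proof. by move=> u_le0; rewrite -(ler_sqrt D (sqr_ge0 u)) sqrtr_sqr ler0_norm // lerNr. Qed.

Definition hroot (n : nat) : R :=
  2 ^+ n + Num.sqrt (2 ^+ (2 * n) - 2 ^+ n + 2) - 2^-1.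

Definition hdisc (n : nat) x : R :=
  x ^+ 2 - (2 ^+ n.+1 - 1) * x - 7 / 4.

Lemma sqr_sqrt_hroot t : Num.sqrt (t ^+ 2 - t + 2) ^+ 2 = t ^+ 2 - t + 2.
Proof. by rewrite sqr_sqrtr //; nra. Qed.

Lemma sqrt_hroot_ge t : t - 2^-1 <= Num.sqrt (t ^+ 2 - t + 2).
Proof.
have := sqr_sqrt_hroot t; have := sqrtr_ge0 (t ^+ 2 - t + 2).
set s := Num.sqrt _; nra.
Qed.

Lemma hdisc_factor (n : nat) x :
  hdisc n x = (x - hroot n) * (x - 2 ^+ n + Num.sqrt (2 ^+ (2 * n) - 2 ^+ n + 2) + 2^-1).
Proof.
rewrite /hdisc /hroot mulnC exprM [2 ^+ n.+1]exprS.
have := sqr_sqrt_hroot (2 ^+ n); set t := 2 ^+ n; set s := Num.sqrt _ => s2.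
have -> : (x - (t + s - 2^-1)) * (x - t + s + 2^-1) = (x - t + 2^-1) ^+ 2 - s ^+ 2 by ring.
by rewrite s2; field.
Qed.

Lemma hdisc_le0 (n : nat) x : 0 <= x -> x <= hroot n -> hdisc n x <= 0.
Proof.
move=> x_ge0 x_le_root; rewrite hdisc_factor mulr_le0_ge0 ?subr_le0 //.
have := sqrt_hroot_ge (2 ^+ n); rewrite mulnC exprM; lra.
Qed.

End Discriminant.

Section HilbertPolynomial.
Variables a b n : nat.
Hypotheses (b_gt0 : (0 < b)%N) (n_gt0 : (0 < n)%N).

Let h := hpoly a b n.

Lemma hpoly0 : h 0 = b.
Proof. by rewrite /h /hpoly /= exp0n // muln0. Qed.

Lemma hpoly1 : h 1 = (a + b)%N.
Proof. by rewrite /h /hpoly /= exp1n muln1. Qed.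

Lemma hpoly2 : h 2 = (a * 2 ^ n + b)%N.
Proof. by []. Qed.

Lemma betaL_hpoly_k1_ge0 {F : nat} : 0 <= betaL h 0 1 F.+2 -> (F.+2 * b <= a + b)%N.
Proof. rewrite betaL_k1 hpoly0 hpoly1; lia. Qed.

Variable R : rcfType.
Let alpha : R := a%:R / b%:R.
Let b_gt0R : 0 < b%:R :> R. Proof. by rewrite ltr0n. Qed.
Let b_neq0 : b%:R != 0 :> R. Proof. exact: lt0r_neq0. Qed.

Lemma betaL_hpoly_k2 (F : nat) :
  (betaL h 0 2 F.+2)%:~R = b%:R / 2 * ((F.+2%:R - alpha - 3 / 2) ^+ 2 - hdisc n alpha).
Proof.
have binE : 'C(F.+2, 2)%:R = F.+2%:R * F.+1%:R / 2 :> R.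
  have /(congr1 (GRing.natmul (1 : R))) : (2 * 'C(F.+2, 2) = F.+2 * F.+1)%N.
    by rewrite -mul_bin_diag bin1.
  by rewrite !natrM => <-; rewrite mulrC mulKf //; apply: lt0r_neq0; lra.
rewrite (betaL_k2 h F) hpoly0 hpoly1 hpoly2 /alpha /hdisc intrD intrB -!pmulrn !natrM binE.
rewrite !natrD natrM natrX [2 ^+ n.+1]exprS.
have -> : F.+2%:R = F%:R + 2 :> R by rewrite -addn2 natrD.
have -> : F.+1%:R = F%:R + 1 :> R by rewrite -addn1 natrD.
by field.
Qed.

Lemma betaL_hpoly_k2_ge0 (d : int) : 2 <= d ->
  (0 <= betaL h 0 2 d) = (hdisc n alpha <= (d%:~R - alpha - 3 / 2) ^+ 2).
Proof.
case: d => [[|[|F]]|] // _.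
by rewrite -(ler0z R) betaL_hpoly_k2 pmulr_rge0 ?subr_ge0 // divr_gt0.
Qed.

Lemma betaL_hpoly_k2_ge0_small_alpha (d : int) :
  2 <= d -> alpha <= hroot n -> 0 <= betaL h 0 2 d.
Proof.
move=> d_ge2 alpha_le; rewrite betaL_hpoly_k2_ge0 //.
have alpha_ge0 : 0 <= alpha by rewrite divr_ge0.
exact: le_trans (hdisc_le0 _ _ alpha_ge0 alpha_le) (sqr_ge0 _).
Qed.

Lemma betaL_hpoly_k2_ge0_small_d (d : int) :
  2 <= d -> d%:~R <= alpha + 3 / 2 - Num.sqrt (hdisc n alpha) -> 0 <= betaL h 0 2 d.
Proof.
move=> d_ge2 d_le; have := sqrtr_ge0 (hdisc n alpha) => sqrt_ge0.
by rewrite betaL_hpoly_k2_ge0 // ler_sqr_sqrt_npos; lra.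
Qed.

Lemma hdepth_ok_hpoly_le (d : int) : 2 <= d -> hdepth_ok h 0 d ->
  d%:~R <= alpha + 3 / 2 - Num.sqrt (hdisc n alpha).
Proof.
move=> d_ge2 ok_d.
have d_le : d%:~R <= alpha + 1.
  case: d d_ge2 ok_d => [[|[|F]]|] // _ ok_d.
  have := betaL_hpoly_k1_ge0 (ok_d 1 isT).
  rewrite -pmulrn -(ler_nat R) natrM natrD => le_ab.
  by rewrite -(ler_pM2r b_gt0R) [leRHS]mulrDl divfK // mul1r.
by have := ok_d 2 d_ge2; rewrite betaL_hpoly_k2_ge0 // ler_sqr_sqrt_npos; lra.
Qed.

Lemma hdepth_hpoly_lt (d : int) : 2 <= d ->
  alpha + 3 / 2 - Num.sqrt (hdisc n alpha) < d%:~R ->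
  exists m, is_hdepth h 0 m /\ m < d.
Proof.
move=> d_ge2 gt_d.
have ok_lt_d x : hdepth_ok h 0 x -> x < d.
  case: (leP 2 x) => [x_ge2 /(hdepth_ok_hpoly_le _ x_ge2) le_x | x_lt2 _].
    by rewrite -(ltr_int R); apply: le_lt_trans gt_d.
  exact: lt_le_trans x_lt2 d_ge2.
have [m [ok_m max_m]] : exists m, hdepth_ok h 0 m /\ forall x, hdepth_ok h 0 x -> x <= m.
  apply: (@int_has_max _ (-1) (d - 1)) => [|x /ok_lt_d]; last lia.
  exact: hdepth_ok_lt0.
by exists m; split; [split | apply: ok_lt_d].
Qed.

End HilbertPolynomial.

Theorem lemma3p4 (R : rcfType) (a b n : nat) (d : int) :
  (0 < a)%N -> (0 < b)%N -> (0 < n)%N ->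
  let h := hpoly a b n in
  let alpha : R := a%:R / b%:R in
  let c : nat := (a %/ b + 1)%N in
  let alpha1 : R := 2 ^+ n + Num.sqrt (2 ^+ (2 * n) - 2 ^+ n + 2) - 2^-1 in
  let g (x : R) : R := x + 3 / 2 - Num.sqrt (x ^+ 2 - (2 ^+ n.+1 - 1) * x - 7 / 4) in
  2 <= d -> d <= c%:Z ->
  (alpha <= alpha1 -> 0 <= betaL h 0 2 d) /\
  (alpha1 < alpha -> d%:~R <= g alpha -> 0 <= betaL h 0 2 d) /\
  (alpha1 < alpha -> g alpha < d%:~R -> exists m : int, is_hdepth h 0 m /\ m < d).
Proof.
move=> _ b_gt0 n_gt0 h alpha c alpha1 g d_ge2 _.
split; [|split] => [|_|_].
- exact: betaL_hpoly_k2_ge0_small_alpha.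
- exact: betaL_hpoly_k2_ge0_small_d.
- exact: hdepth_hpoly_lt.
Qed.
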